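(* Let $p\ge2$ and $n,\ell,t$ be positive integers with $n\ge\ell$. For integers $w,r\ge0$ let $\xi_r$ be a prime with $\max(t,r)<\xi_r\le2\max(t,r)+1$ and let $\mathbf{a}^*_{r,w}\in\{0,\dots,\xi_r-1\}^t$ maximize $|\mathcal{C}_{2,t,1}(r+w,r,\mathbf{a},\xi_r)|$ over $\mathbf{a}$. Define $$\mathcal{C}^2=\bigcup_{w=0}^{\lfloor n/\ell\rfloor-1}\bigl\{\mathbf{x}\in\mathbb{Z}_p^n:\ \mu(\mathbf{x})\in\mathbb{Z}_p^{n-(w+1)\ell},\ \pi(\mathbf{x})\in\mathcal{C}_{2,t,1}(r+w,r,\mathbf{a}^*_{r,w},\xi_r)\text{ where }r=\mathrm{wt}_H(\mu(\mathbf{x}))\bigr\}.$$ Then $$|\mathcal{C}^2|\ge p^\ell\sum_{w=0}^{\lfloor n/\ell\rfloor-1}\ \sum_{r=0}^{n-(w+1)\ell}\frac{N_{p,\ell}\bigl(n-(w+1)\ell,r\bigr)\binom{r+w}{w}}{(2\max(r,t)+1)^t}.$$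
   Context: $\mathbb{Z}_p=\{0,1,\dots,p-1\}$ with arithmetic mod $p$. For $\mathbf{x}\in\mathbb{Z}_p^n$ let $\mathbf{z}\in\mathbb{Z}_p^{n-\ell}$ with $z_i=x_{i+\ell}-x_i$ ($1\le i\le n-\ell$), and write uniquely $\mathbf{z}=0^{b_1}u_10^{b_2}u_2\cdots u_r0^{b_{r+1}}$ with $u_i\in\mathbb{Z}_p\setminus\{0\}$, $b_i\ge0$. Define the duplication root $\mu(\mathbf{x})=0^{b_1\bmod\ell}u_10^{b_2\bmod\ell}u_2\cdots u_r0^{b_{r+1}\bmod\ell}$ and the binary word $\pi(\mathbf{x})=0^{\lfloor b_1/\ell\rfloor}1\,0^{\lfloor b_2/\ell\rfloor}1\cdots1\,0^{\lfloor b_{r+1}/\ell\rfloor}$ (with $r$ ones). For binary words: any $\mathbf{s}\in\{0,1\}^m$ of Hamming weight $r$ is $\mathbf{s}=0^{c_1}1\,0^{c_2}1\cdots1\,0^{c_{r+1}}$, and for a prime $\xi$ and $\mathbf{a}\in\{0,\dots,\xi-1\}^t$, $$\mathcal{C}_{2,t,1}(m,r,\mathbf{a},\xi)=\Bigl\{\mathbf{s}\in\{0,1\}^m:\ \mathrm{wt}_H(\mathbf{s})=r,\ \sum_{i=1}^{r+1}i^q c_i\equiv a_q\pmod{\xi}\ \forall\,1\le q\le t\Bigr\}.$$ $N_{p,\ell}(m,r)$ denotes the number of words in $\mathbb{Z}_p^m$ of Hamming weight $r$ containing no $\ell$ consecutive zeros. *)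

(* Words over Z_p are handled as seq nat (entries < p). *)
From mathcomp Require Import all_boot all_order all_algebra.
Set Implicit Arguments. Unset Strict Implicit. Unset Printing Implicit Defensive.

(* Zero-run lengths b_1,...,b_{r+1} of z = 0^{b_1} u_1 ... u_r 0^{b_{r+1}}
   (u_i nonzero).  Always of size r+1. *)
Fixpoint zruns (s : seq nat) : seq nat :=
  match s with
  | [::] => [:: 0]
  | a :: s' => let bs := zruns s' in
               if a == 0 then (head 0 bs).+1 :: behead bs else 0 :: bs
  end.

Definition nonzeros (s : seq nat) : seq nat := filter (fun a => a != 0) s.

Definition wtH (s : seq nat) : nat := count (fun a => a != 0) s.

(* z_i = x_{i+l} - x_i mod p, 1 <= i <= n - l (here 0-based) *)
Definition diffs (p l : nat) (x : seq nat) : seq nat :=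
  [seq (nth 0 x (i + l) + p - nth 0 x i) %% p | i <- iota 0 (size x - l)].

(* 0^{b_1 mod l} u_1 ... u_r 0^{b_{r+1} mod l} *)
Definition dup_root_z (l : nat) (z : seq nat) : seq nat :=
  flatten [seq nseq (nth 0 (zruns z) i %% l) 0 ++ take 1 (drop i (nonzeros z))
          | i <- iota 0 (size (zruns z))].

(* 0^{b_1 / l} 1 0^{b_2 / l} 1 ... 1 0^{b_{r+1} / l} *)
Definition pi_z (l : nat) (z : seq nat) : seq bool :=
  flatten [seq nseq (nth 0 (zruns z) i %/ l) false
               ++ (if i < size (nonzeros z) then [:: true] else [::])
          | i <- iota 0 (size (zruns z))].

Definition mu (p l : nat) (x : seq nat) : seq nat := dup_root_z l (diffs p l x).
Definition piw (p l : nat) (x : seq nat) : seq bool := pi_z l (diffs p l x).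

Definition inC2 (t m r : nat) (a : seq nat) (xi : nat) (s : seq bool) : bool :=
  let c := zruns (map nat_of_bool s) in
  [&& size s == m, count id s == r &
      all (fun q => (\sum_(i < size c) (i.+1) ^ q * nth 0 c i) %% xi
                    == nth 0 a q.-1 %% xi) (iota 1 t)].

Definition C2card (t m r : nat) (a : seq nat) (xi : nat) : nat :=
  #|[set s : m.-tuple bool | inC2 t m r a xi s]|.

Definition Nwords (p l m r : nat) : nat :=
  #|[set s : m.-tuple 'I_p |
       (wtH (map val s) == r) && ~~ infix (nseq l 0) (map val s)]|.

From mathcomp Require Import all_boot all_order all_algebra.
From mathcomp Require Import zify.
Set Implicit Arguments. Unset Strict Implicit. Unset Printing Implicit Defensive.

(* The first l symbols of x together with its difference word z determine x,
   and z is determined by (mu(x), pi(x)).  Conversely, every root y of length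
   n - (w+1) l and weight r without l consecutive zeros and every binary word s
   of length r + w and weight r arise: take the difference word whose zero runs
   are b_i + l c_i, where the b_i < l are the zero runs of y and the c_i those
   of s.  So the layer of C^2 on which mu(x) has length n - (w+1) l and weight r
   has p^l N_{p,l}(n - (w+1) l, r) |C_{2,t,1}(r + w, r, a*, xi_r)| elements,
   and distinct (w, r) give disjoint layers.  Finally, the binom(r + w, w)
   binary words of weight r fall into at most xi_r^t <= (2 max(r,t) + 1)^t
   classes according to their t moment sums mod xi_r, and a* picks the largest
   class. *)

(* [unruns [:: b_1; ...; b_(r+1)] [:: u_1; ...; u_r] = 0^b_1 u_1 ... u_r 0^b_(r+1)],
   the inverse of [s |-> (zruns s, nonzeros s)]. *)
Fixpoint unruns (bs us : seq nat) : seq nat :=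
  match bs with
  | [::] => [::]
  | b :: bs' => nseq b 0 ++ take 1 us ++ unruns bs' (behead us)
  end.

Lemma flatten_unruns bs us :
  flatten [seq nseq (nth 0 bs i) 0 ++ take 1 (drop i us) | i <- iota 0 (size bs)]
  = unruns bs us.
Proof.
elim: bs us => [|b bs IH] us //=.
rewrite drop0 -IH -catA -[1]addn0 iotaDl -map_comp; congr (_ ++ _ ++ flatten _).
apply: eq_map => i /=; by rewrite add1n -drop1 drop_drop addn1.
Qed.

Lemma zruns_neq0 s : zruns s != [::].
Proof. by case: s => //= a s; case: ifP. Qed.

Lemma size_nonzeros s : size (nonzeros s) = wtH s.
Proof. by rewrite size_filter. Qed.

Lemma nonzeros_all s : all (fun u => u != 0) (nonzeros s).
Proof. exact: filter_all. Qed.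

Lemma size_zruns s : size (zruns s) = (wtH s).+1.
Proof.
rewrite /wtH; elim: s => //= a s IH; case: eqVneq => _ /=; last by rewrite IH.
by case: (zruns s) (zruns_neq0 s) IH.
Qed.

Lemma unrunsK s : unruns (zruns s) (nonzeros s) = s.
Proof.
elim: s => //= a s IH; rewrite /nonzeros /=; case: eqVneq => [->|_] /=.
  by case: (zruns s) (zruns_neq0 s) IH => //= b bs _ ->.
by rewrite take0 IH.
Qed.

Lemma zruns_nseq b : zruns (nseq b 0) = [:: b].
Proof. by elim: b => //= b ->. Qed.

Lemma zruns_nseq_cons b u s : u != 0 -> zruns (nseq b 0 ++ u :: s) = b :: zruns s.
Proof. by move=> /negbTE u0; elim: b => [|b /= ->] /=; rewrite ?u0. Qed.

Lemma nonzeros_nseq b : nonzeros (nseq b 0) = [::].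
Proof. by rewrite /nonzeros filter_nseq; case: b. Qed.

Section Unruns.
Variables (bs us : seq nat).
Hypothesis (size_bs : size bs = (size us).+1).

Lemma size_unruns : size (unruns bs us) = sumn bs + size us.
Proof.
elim: bs us size_bs => [|b bs' IH] [|u us'] //=.
  by case: bs' {IH} => //= _; rewrite cats0 size_nseq !addn0.
by case=> Hs; rewrite size_cat size_nseq /= take0 IH //; lia.
Qed.

Hypothesis (us_neq0 : all (fun u => u != 0) us).

Lemma zruns_unruns : zruns (unruns bs us) = bs.
Proof.
elim: bs us size_bs us_neq0 => [|b bs' IH] [|u us'] //=.
  by case: bs' {IH} => //= _ _; rewrite cats0 zruns_nseq.
by case=> Hs /andP [u0 Hu]; rewrite take0 zruns_nseq_cons // IH.
Qed.

Lemma nonzeros_unruns : nonzeros (unruns bs us) = us.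
Proof.
elim: bs us size_bs us_neq0 => [|b bs' IH] [|u us'] //=.
  by case: bs' {IH} => //= _ _; rewrite cats0 nonzeros_nseq.
case=> Hs /andP [u0 Hu]; rewrite take0 /nonzeros filter_cat /= u0.
by rewrite -/(nonzeros _) nonzeros_nseq -/(nonzeros _) IH.
Qed.

End Unruns.

Lemma mem_unruns bs us x : x \in unruns bs us -> x = 0 \/ x \in us.
Proof.
elim: bs us => [|b bs IH] us //=.
rewrite !mem_cat => /orP [/nseqP [] -> _|/orP [/mem_take|/IH [->|]]]; auto.
by case: us => //= u us H; right; rewrite inE H orbT.
Qed.

Lemma prefix_zruns s : prefix (nseq (head 0 (zruns s)) 0) s.
Proof. by elim: s => //= a s IH; case: eqP => [->|]. Qed.

Lemma infix_zruns s b : b \in zruns s -> infix (nseq b 0) s.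
Proof.
elim: s => [|a s IH]; first by rewrite inE => /eqP ->.
rewrite [zruns _]/= infix_consl; case: eqP => [->|_].
  case E: (zruns s) (zruns_neq0 s) IH (prefix_zruns s) => [|c cs] // _ IH Hp.
  rewrite inE => /orP [/eqP ->|H]; first by rewrite [nseq _ _]/= prefix_cons Hp.
  by rewrite IH ?orbT // inE H orbT.
by rewrite inE => /orP [/eqP ->|/IH ->]; rewrite ?orbT.
Qed.

Lemma zruns_lt l s : ~~ infix (nseq l 0) s -> all (fun b => b < l) (zruns s).
Proof.
move=> Hs; apply/allP => b /infix_zruns Hb; rewrite ltnNge; apply: contra Hs => lb.
by apply: prefix_infix_trans Hb; rewrite -(subnKC lb) nseqD prefix_prefix.
Qed.

Lemma dup_root_zE l z :
  dup_root_z l z = unruns [seq b %% l | b <- zruns z] (nonzeros z).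
Proof.
rewrite /dup_root_z -flatten_unruns size_map; congr flatten.
by apply/eq_in_map => i; rewrite mem_iota => /andP [_ Hi]; rewrite (nth_map 0).
Qed.

Lemma pi_zE l z :
  map nat_of_bool (pi_z l z) = unruns [seq b %/ l | b <- zruns z] (nseq (wtH z) 1).
Proof.
rewrite /pi_z -flatten_unruns map_flatten -map_comp size_map; congr flatten.
apply/eq_in_map => i; rewrite mem_iota => /andP [_ Hi] /=.
rewrite map_cat map_nseq (nth_map 0) // drop_nseq size_nonzeros.
by case: ltnP => H; [rewrite take_nseq ?subn_gt0 | move: H; rewrite -subn_eq0 => /eqP ->].
Qed.

Lemma nonzeros_bool (s : seq bool) : nonzeros (map nat_of_bool s) = nseq (count id s) 1.
Proof. by elim: s => //= -[] s IH; rewrite /nonzeros /= -/(nonzeros _) IH. Qed.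

Lemma wtH_bool (s : seq bool) : wtH (map nat_of_bool s) = count id s.
Proof. by rewrite -size_nonzeros nonzeros_bool size_nseq. Qed.

Fixpoint combine_runs (l : nat) (bs cs : seq nat) : seq nat :=
  match bs, cs with
  | b :: bs', c :: cs' => b + l * c :: combine_runs l bs' cs'
  | _, _ => [::]
  end.

Section CombineRuns.
Variables (l : nat) (bs cs : seq nat).
Hypothesis (size_bc : size bs = size cs).

Lemma size_combine_runs : size (combine_runs l bs cs) = size bs.
Proof. by elim: bs cs size_bc => [|b bs' IH] [|c cs'] //= [] /IH ->. Qed.

Lemma sumn_combine_runs : sumn (combine_runs l bs cs) = sumn bs + l * sumn cs.
Proof.
elim: bs cs size_bc => [|b bs' IH] [|c cs'] //= => [_|[] /IH ->]; lia.
Qed.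

Hypotheses (l_gt0 : 0 < l) (bs_lt : all (fun b => b < l) bs).

Lemma combine_runs_modn : [seq b %% l | b <- combine_runs l bs cs] = bs.
Proof.
elim: bs cs size_bc bs_lt => [|b bs' IH] [|c cs'] //= [] Hs /andP [bl Hb].
by rewrite IH // mulnC addnC modnMDl modn_small.
Qed.

Lemma combine_runs_divn : [seq b %/ l | b <- combine_runs l bs cs] = cs.
Proof.
elim: bs cs size_bc bs_lt => [|b bs' IH] [|c cs'] //= [] Hs /andP [bl Hb].
by rewrite IH // mulnC addnC divnMDl // divn_small ?addn0.
Qed.

End CombineRuns.

Lemma size_sumn_zruns s : size s = sumn (zruns s) + wtH s.
Proof.
by rewrite -{1}(unrunsK s) size_unruns ?size_nonzeros // size_zruns.
Qed.

(* The difference word with duplication root [y] and [pi_z] equal to [s]. *)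
Definition dup_word (l : nat) (y : seq nat) (s : seq bool) : seq nat :=
  unruns (combine_runs l (zruns y) (zruns (map nat_of_bool s))) (nonzeros y).

Section DupWord.
Variables (l : nat) (y : seq nat) (s : seq bool).
Hypothesis (count_s : count id s = wtH y).

Let size_runs : size (zruns y) = size (zruns (map nat_of_bool s)).
Proof. by rewrite !size_zruns wtH_bool count_s. Qed.

Let size_combined :
  size (combine_runs l (zruns y) (zruns (map nat_of_bool s))) = (size (nonzeros y)).+1.
Proof. by rewrite size_combine_runs // size_zruns size_nonzeros. Qed.

Lemma zruns_dup_word :
  zruns (dup_word l y s) = combine_runs l (zruns y) (zruns (map nat_of_bool s)).
Proof. exact: zruns_unruns (nonzeros_all y). Qed.

Lemma nonzeros_dup_word : nonzeros (dup_word l y s) = nonzeros y.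
Proof. exact: nonzeros_unruns (nonzeros_all y). Qed.

Lemma size_dup_word : size (dup_word l y s) = size y + l * (size s - count id s).
Proof.
rewrite size_unruns // sumn_combine_runs // [size y]size_sumn_zruns size_nonzeros.
have := size_sumn_zruns (map nat_of_bool s); rewrite size_map wtH_bool => ->.
by rewrite addnK addnAC.
Qed.

Lemma dup_word_lt p :
  0 < p -> all (fun a => a < p) y -> all (fun a => a < p) (dup_word l y s).
Proof.
move=> p_gt0 y_lt; apply/allP => a /mem_unruns [->//|].
by rewrite mem_filter => /andP [_ /(allP y_lt)].
Qed.

Hypotheses (l_gt0 : 0 < l) (y_runs : ~~ infix (nseq l 0) y).

Lemma dup_root_dup_word : dup_root_z l (dup_word l y s) = y.
Proof.
rewrite dup_root_zE zruns_dup_word nonzeros_dup_word combine_runs_modn ?unrunsK //.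
exact: zruns_lt.
Qed.

Lemma pi_dup_word : pi_z l (dup_word l y s) = s.
Proof.
apply: (@inj_map _ _ nat_of_bool); first by case=> [] [].
rewrite pi_zE zruns_dup_word combine_runs_divn ?zruns_lt //.
by rewrite -size_nonzeros nonzeros_dup_word size_nonzeros -count_s -nonzeros_bool unrunsK.
Qed.

End DupWord.

Lemma modn_addKsub p a b : a < p -> b < p -> ((a + b) %% p + p - a) %% p = b.
Proof.
move=> a_lt b_lt; have [ab_lt|ab_ge] := ltnP (a + b) p.
  by rewrite (modn_small ab_lt) -addnA addKn modnDr modn_small.
have -> : (a + b) %% p = a + b - p.
  by rewrite -{1}(subnK ab_ge) modnDr modn_small //; lia.
by rewrite (_ : _ + p - a = b) ?modn_small //; lia.
Qed.

Section Antidiff.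
Variables (p l n : nat).
Hypotheses (p_gt0 : 0 < p) (l_gt0 : 0 < l).

(* [x_j = pre_(j mod l) + z_(j mod l) + z_(j mod l + l) + ...], summing over the
   indices below [j], so that [x_(j + l) - x_j = z_j]. *)
Definition antidiff_at (pre z : seq nat) (j : nat) : nat :=
  nth 0 pre (j %% l) + \sum_(k < j %/ l) nth 0 z (j %% l + k * l).

Definition antidiff (pre z : seq nat) : n.-tuple 'I_p :=
  [tuple Ordinal (ltn_pmod (antidiff_at pre z i) p_gt0) | i < n].

Lemma antidiffE pre z :
  map val (antidiff pre z) = [seq antidiff_at pre z j %% p | j <- iota 0 n].
Proof.
apply: (@eq_from_nth _ 0); first by rewrite size_map size_tuple size_map size_iota.
move=> i; rewrite size_map size_tuple => i_lt.
rewrite (nth_map (Ordinal p_gt0)) ?size_tuple // (nth_map 0) ?size_iota //.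
by rewrite -(tnth_nth _ _ (Ordinal i_lt)) /antidiff tnth_mktuple nth_iota.
Qed.

Lemma diffs_antidiff pre z :
  size z = n - l -> all (fun a => a < p) z -> diffs p l (map val (antidiff pre z)) = z.
Proof.
move=> z_size z_lt; rewrite antidiffE /diffs size_map size_iota -z_size.
rewrite -[RHS](mkseq_nth 0); apply/eq_in_map => i; rewrite mem_iota => /andP [_ i_lt].
rewrite !(nth_map 0) ?size_iota ?nth_iota; try lia.
rewrite /antidiff_at !add0n modnDr.
have -> : (i + l) %/ l = (i %/ l).+1 by rewrite -{1}(mul1n l) addnC divnMDl.
rewrite big_ord_recr /= addnA -(modnDml (_ + _)) [i %% l + _]addnC -divn_eq.
by rewrite modn_addKsub ?ltn_pmod // (allP z_lt) ?mem_nth.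
Qed.

Lemma take_antidiff pre z :
  l <= n -> size pre = l -> all (fun a => a < p) pre -> take l (map val (antidiff pre z)) = pre.
Proof.
move=> l_le_n pre_size pre_lt; rewrite antidiffE -map_take take_iota (minn_idPl l_le_n).
rewrite -[RHS](mkseq_nth 0) pre_size; apply/eq_in_map => i; rewrite mem_iota => /andP [_ i_lt].
rewrite /antidiff_at modn_small // divn_small // big_ord0 addn0 modn_small //.
by rewrite (allP pre_lt) ?mem_nth ?pre_size.
Qed.

End Antidiff.

Lemma binomial_le_card_weight m r :
  'C(m, r) <= #|[set s : m.-tuple bool | count id s == r]|.
Proof.
rewrite -[m in 'C(m, _)]card_ord -card_draws.
pose indicator (A : {set 'I_m}) : m.-tuple bool := [tuple i \in A | i < m].
have indicator_inj : injective indicator.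
  move=> A B AB; apply/setP => i.
  by have := congr1 (fun s => tnth s i) AB; rewrite !tnth_mktuple.
rewrite -(card_imset _ indicator_inj); apply/subset_leq_card/subsetP => s /imsetP [A].
rewrite !inE => /eqP <- ->.
rewrite count_map val_ord_tuple cardE /enum_mem -enumT size_filter.
by rewrite (@eq_filter _ _ predT) // filter_predT.
Qed.

Definition moment (s : seq bool) (q : nat) : nat :=
  let c := zruns (map nat_of_bool s) in \sum_(i < size c) i.+1 ^ q * nth 0 c i.

Section Syndrome.
Variables (t m r xi : nat) (a : seq nat).
Hypotheses (xi_gt0 : 0 < xi)
  (a_max : forall b : seq nat, size b = t -> all (fun c => c < xi) b ->
             C2card t m r b xi <= C2card t m r a xi).

Definition syndrome (s : m.-tuple bool) : t.-tuple 'I_xi :=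
  [tuple Ordinal (ltn_pmod (moment s q.+1) xi_gt0) | q < t].

Lemma inC2_syndrome (s : m.-tuple bool) :
  count id s = r -> inC2 t m r (map val (syndrome s)) xi s.
Proof.
move=> s_wt; rewrite /inC2 size_tuple s_wt !eqxx; apply/allP => q.
rewrite mem_iota => /andP [q_gt0 q_le]; have q_lt : q.-1 < t by lia.
rewrite (nth_map (Ordinal xi_gt0)) ?size_tuple // -(tnth_nth _ _ (Ordinal q_lt)).
by rewrite tnth_mktuple /= prednK // modn_mod.
Qed.

Lemma card_weight_le_C2card :
  #|[set s : m.-tuple bool | count id s == r]| <= xi ^ t * C2card t m r a xi.
Proof.
have -> : xi ^ t = #|{: t.-tuple 'I_xi}| by rewrite card_tuple card_ord.
rewrite -sum1_card (partition_big syndrome predT) //= -sum_nat_const.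
apply: leq_sum => b _.
have b_max : C2card t m r (map val b) xi <= C2card t m r a xi.
  apply: a_max; first by rewrite size_map size_tuple.
  by apply/allP => _ /mapP [c _ ->]; apply: ltn_ord.
apply: leq_trans b_max; rewrite sum1_card /C2card; apply/subset_leq_card/subsetP => s /andP [].
by rewrite !inE => /eqP s_wt /eqP <-; apply: inC2_syndrome.
Qed.

End Syndrome.

Lemma binomial_le_C2card t w r xi D (a : seq nat) :
  0 < xi -> xi <= D ->
  (forall b : seq nat, size b = t -> all (fun c => c < xi) b ->
     C2card t (r + w) r b xi <= C2card t (r + w) r a xi) ->
  'C(r + w, w) <= D ^ t * C2card t (r + w) r a xi.
Proof.
move=> xi_gt0 xi_le a_max; rewrite -[w in 'C(_, w)](addKn r) bin_sub ?leq_addr //.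
apply: leq_trans (binomial_le_card_weight _ _) _.
apply: leq_trans (card_weight_le_C2card xi_gt0 a_max) _.
have xi_t_le : xi ^ t <= D ^ t by elim: (t) => // k IH; rewrite !expnS leq_mul.
by rewrite leq_mul2r xi_t_le orbT.
Qed.

Lemma sum_card_fibres_le (T I : finType) (K : eqType) (A : {set T}) (F : I -> {set T})
    (key : T -> K) (tag : I -> K) :
  injective tag -> (forall i, F i \subset [set x in A | key x == tag i]) ->
  \sum_i #|F i| <= #|A|.
Proof.
move=> tag_inj F_sub.
apply: (@leq_trans (\sum_i \sum_(x in A) (key x == tag i : nat))).
  apply: leq_sum => i _; rewrite -big_mkcondr sum1dep_card.
  exact: subset_leq_card.
rewrite exchange_big -sum1_card; apply: leq_sum => x _.
rewrite -big_mkcond sum1dep_card; apply/card_le1_eqP => i j.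
by rewrite !inE => /eqP ki /eqP kj; apply: tag_inj; rewrite -ki -kj.
Qed.

Lemma all_val_lt k (s : seq 'I_k) : all (fun a => a < k) (map val s).
Proof. by apply/allP => _ /mapP [a _ ->]; apply: ltn_ord. Qed.

Lemma map_val_tuple_inj k m : injective (fun s : m.-tuple 'I_k => map val s).
Proof. by move=> s1 s2 /(inj_map val_inj)/val_inj. Qed.

Section Layers.
Variables (p l n : nat).
Hypotheses (p_gt0 : 0 < p) (l_gt0 : 0 < l).

Lemma antidiff_dup_word w (pre y : seq nat) (s : seq bool) :
  w.+1 * l <= n -> size pre = l -> all (fun a => a < p) pre ->
  size y = n - w.+1 * l -> all (fun a => a < p) y -> ~~ infix (nseq l 0) y ->
  size s = wtH y + w -> count id s = wtH y ->
  let x := map val (antidiff l n p_gt0 pre (dup_word l y s)) in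
  [/\ take l x = pre, mu p l x = y & piw p l x = s].
Proof.
move=> wl_le pre_size pre_lt y_size y_lt y_runs s_size s_wt x.
have l_le_n : l <= n by apply: leq_trans wl_le; rewrite leq_pmull.
have x_diffs : diffs p l x = dup_word l y s.
  apply: diffs_antidiff => //; last exact: dup_word_lt.
  by rewrite size_dup_word // y_size s_size s_wt addKn; rewrite mulSn in wl_le; lia.
split; first exact: take_antidiff.
- by rewrite /mu x_diffs dup_root_dup_word.
- by rewrite /piw x_diffs pi_dup_word.
Qed.

Definition layer (w r : nat) (P : pred (seq bool)) : {set n.-tuple 'I_p} :=
  [set x : n.-tuple 'I_p | let mx := mu p l (map val x) in
           [&& size mx == n - w.+1 * l, wtH mx == r & P (piw p l (map val x))]].

Lemma card_layer_ge w r (P : pred (seq bool)) :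
  w.+1 * l <= n -> (forall s, P s -> count id s = r) ->
  p ^ l * Nwords p l (n - w.+1 * l) r * #|[set s : (r + w).-tuple bool | P s]|
  <= #|layer w r P|.
Proof.
move=> wl_le P_wt; set m := n - w.+1 * l.
pose Y := [set y : m.-tuple 'I_p | (wtH (map val y) == r) && ~~ infix (nseq l 0) (map val y)].
set S := [set s : (r + w).-tuple bool | P s].
pose f (u : l.-tuple 'I_p * m.-tuple 'I_p * (r + w).-tuple bool) :=
  antidiff l n p_gt0 (map val u.1.1) (dup_word l (map val u.1.2) u.2).
have f_spec u : u \in setX (setX setT Y) S ->
    [/\ take l (map val (f u)) = map val u.1.1, mu p l (map val (f u)) = map val u.1.2
      & piw p l (map val (f u)) = u.2].
  case: u => [[pre y] s]; rewrite !inE /= => /andP [/andP [/eqP y_wt y_runs] /P_wt s_wt].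
  by apply: (antidiff_dup_word (w := w)); rewrite ?size_map ?size_tuple ?all_val_lt ?y_wt ?s_wt.
have <- : #|setX (setX [set: l.-tuple 'I_p] Y) S| = p ^ l * Nwords p l m r * #|S|.
  by rewrite !cardsX cardsT card_tuple card_ord.
rewrite -(card_in_imset (f := f)); last first.
  move=> u1 u2 /f_spec [pre1E y1E s1E] /f_spec + f12; rewrite -f12 pre1E y1E s1E.
  case: u1 u2 {f12 pre1E y1E s1E} => [[pre1 y1] s1] [[pre2 y2] s2] /=.
  by move=> [/map_val_tuple_inj -> /map_val_tuple_inj -> /val_inj ->].
apply/subset_leq_card/subsetP => _ /imsetP [u u_in ->]; rewrite inE /=.
have [_ -> ->] := f_spec u u_in; move: u_in; rewrite !inE => /andP [/andP [_ /andP [y_wt _]] Pu].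
by rewrite size_tuple eqxx y_wt.
Qed.

Lemma sum_layers_le (P : nat -> nat -> pred (seq bool)) :
  (forall w r s, P w r s -> count id s = r) ->
  \sum_(w < n %/ l) \sum_(r < (n - w.+1 * l).+1)
     p ^ l * Nwords p l (n - w.+1 * l) r * #|[set s : (r + w).-tuple bool | P w r s]|
  <= #|[set x : n.-tuple 'I_p |
          [exists w : 'I_(n %/ l), let mx := mu p l (map val x) in
             (size mx == n - w.+1 * l) && P w (wtH mx) (piw p l (map val x))]]|.
Proof.
move=> P_wt; set C := [set x | _].
have wl_le (w : 'I_(n %/ l)) : w.+1 * l <= n.
  by apply: leq_trans (leq_divM n l); rewrite leq_mul2r ltn_ord orbT.
pose Cw (w : 'I_(n %/ l)) := [set x in C | size (mu p l (map val x)) == n - w.+1 * l].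
apply: leq_trans (@sum_card_fibres_le _ _ _ C Cw (fun x => size (mu p l (map val x)))
                    (fun w => n - w.+1 * l) _ _); first last.
- by move=> w; rewrite subxx.
- move=> w1 w2 w12; apply/val_inj/eqP; rewrite -eqSS -(eqn_pmul2r l_gt0).
  by apply/eqP; rewrite -(subKn (wl_le w1)) -(subKn (wl_le w2)) w12.
apply: leq_sum => w _.
apply: leq_trans (@sum_card_fibres_le _ _ _ (Cw w) (fun r : 'I_(n - w.+1 * l).+1 => layer w r (P w r))
                    (fun x => wtH (mu p l (map val x))) val val_inj _).
  by apply: leq_sum => r _; apply: card_layer_ge (wl_le w) (P_wt w r).
move=> r; apply/subsetP => x; rewrite !inE /= => /and3P [/eqP mx_size /eqP mx_wt Px].
rewrite mx_size mx_wt !eqxx !andbT; apply/existsP; exists w; by rewrite eqxx.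
Qed.

End Layers.

Import Order.TTheory GRing.Theory Num.Theory.
Local Open Scope ring_scope.

Theorem lemma7 (p n l t : nat) (xi : nat -> nat) (astar : nat -> nat -> seq nat) :
  (1 < p)%N -> (0 < n)%N -> (0 < l)%N -> (0 < t)%N -> (l <= n)%N ->
  (forall r : nat, prime (xi r) /\ (maxn t r < xi r <= (maxn t r).*2.+1)%N) ->
  (forall r w : nat,
      [/\ size (astar r w) = t,
          all (fun a => a < xi r)%N (astar r w) &
          forall a : seq nat, size a = t -> all (fun b => b < xi r)%N a ->
            (C2card t (r + w) r a (xi r) <= C2card t (r + w) r (astar r w) (xi r))%N]) ->
  let C := [set x : n.-tuple 'I_p |
              [exists w : 'I_(n %/ l),
                 let mx := mu p l (map val x) in
                 let r := wtH mx in
                 (size mx == n - w.+1 * l)%N &&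
                 inC2 t (r + w) r (astar r w) (xi r) (piw p l (map val x))]] in
  (p ^ l)%:R *
    \sum_(w < n %/ l) \sum_(r < (n - w.+1 * l).+1)
        ((Nwords p l (n - w.+1 * l) r * 'C(r + w, w))%:R
           / ((maxn r t).*2.+1 ^ t)%:R)
  <= (#|C|)%:R :> rat.
Proof.
move=> p_gt1 _ l_gt0 _ _ xi_spec astar_spec; cbv zeta.
have binomial_le w r :
    ('C(r + w, w) <= (maxn r t).*2.+1 ^ t * C2card t (r + w) r (astar r w) (xi r))%N.
  have [xi_prime /andP [_ xi_le]] := xi_spec r; have [_ _ a_max] := astar_spec r w.
  by apply: binomial_le_C2card a_max; rewrite ?prime_gt0 // maxnC.
have inC2_wt w r s : inC2 t (r + w) r (astar r w) (xi r) s -> count id s = r.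
  by case/and3P => _ /eqP.
apply: le_trans (_ : _ <= (\sum_(w < n %/ l) \sum_(r < (n - w.+1 * l).+1)
   p ^ l * Nwords p l (n - w.+1 * l) r * C2card t (r + w) r (astar r w) (xi r))%N%:R) _.
  rewrite natr_sum mulr_sumr ler_sum // => w _; rewrite natr_sum mulr_sumr ler_sum // => r _.
  rewrite mulrA ler_pdivrMr ?ltr0n ?expn_gt0 // -!natrM ler_nat mulnA.
  by rewrite -[X in (_ <= X)%N]mulnA leq_mul2l [X in (_ <= X)%N]mulnC binomial_le orbT.
by rewrite ler_nat; apply: (@sum_layers_le p l n (ltnW p_gt1) l_gt0 _ inC2_wt).
Qed.
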